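(* Let $\theta:\mathbb{A}\to\mathbb{A}^\lambda$ be a primitive substitution satisfying the standing assumptions with $c(\theta)=1$, and let $u=\theta(u)$ be its fixed point. Then $u$ is Weyl rationally almost periodic, and the approximating periodic sequences can be chosen with period $\lambda^k$: for every $\varepsilon>0$ there exist $k\ge1$ and a $\lambda^k$-periodic $w\in\mathbb{A}^{\mathbb{N}}$ with $d_W(u,w)<\varepsilon$.
   Context: Substitution $\theta:\mathbb{A}\to\mathbb{A}^\lambda$, $\lambda\ge2$, with iterates $\theta^k$; primitive: some $\theta^k(a)$ contains all letters for every $a$. Standing assumptions: $\theta(a_0)_0=a_0$, $\theta$ injective on letters, subshift infinite; $u$ the fixed point with $u[0]=a_0$. Column number $c(\theta)=\min_{k\ge1,0\le j<\lambda^k}|\{\theta^k(a)_j:a\in\mathbb{A}\}|$. Weyl pseudo-metric: $d_W(x,y)=\limsup_{N\to\infty}\sup_{\ell\ge0}\frac1N|\{\ell\le n<\ell+N:x[n]\ne y[n]\}|$; $x$ is Weyl rationally almost periodic if it is a $d_W$-limit of periodic sequences over the same alphabet. *)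

From Stdlib Require Import Reals.
From mathcomp Require Import all_boot.
Set Implicit Arguments. Unset Strict Implicit. Unset Printing Implicit Defensive.

Section Subst.
Variables (A : finType) (lambda : nat).

Definition subst_word (theta : A -> lambda.-tuple A) (w : seq A) : seq A :=
  flatten (map (fun a => val (theta a)) w).

Definition subst_iter (theta : A -> lambda.-tuple A) (k : nat) (a : A) : seq A :=
  iter k (subst_word theta) [:: a].

Definition primitive_subst (theta : A -> lambda.-tuple A) : Prop :=
  exists k, 0 < k /\ forall a b : A, b \in subst_iter theta k a.

Definition in_language (theta : A -> lambda.-tuple A) (w : seq A) : Prop :=
  exists k a, infix w (subst_iter theta k a).

Definition in_subshift (theta : A -> lambda.-tuple A) (x : nat -> A) : Prop :=
  forall i n, in_language theta (mkseq (fun m => x (i + m)) n).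

Definition subshift_infinite (theta : A -> lambda.-tuple A) : Prop :=
  ~ exists s : seq (nat -> A),
      forall x, in_subshift theta x -> exists i, i < size s /\ x = nth x s i.

Definition column_card (theta : A -> lambda.-tuple A) (a0 : A) (k j : nat) : nat :=
  #|[set nth a0 (subst_iter theta k a) j | a : A]|.

Definition is_column_number (theta : A -> lambda.-tuple A) (a0 : A) (c : nat) : Prop :=
  (exists k j, 0 < k /\ j < lambda ^ k /\ column_card theta a0 k j = c) /\
  (forall k j, 0 < k -> j < lambda ^ k -> c <= column_card theta a0 k j).

Definition is_fixed_point (theta : A -> lambda.-tuple A) (u : nat -> A) : Prop :=
  forall n (j : 'I_lambda), u (lambda * n + j) = tnth (theta (u n)) j.

Definition mismatches (x y : nat -> A) (l N : nat) : nat :=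
  count (fun n => x n != y n) (iota l N).

Definition periodic_with (w : nat -> A) (p : nat) : Prop :=
  forall n, w (n + p) = w n.

End Subst.

Open Scope R_scope.

Definition is_sup (S : R -> Prop) (s : R) : Prop := is_lub S s.
Definition is_inf (S : R -> Prop) (s : R) : Prop := is_lub (fun t => S (- t)) (- s).

Definition is_limsup (D : nat -> R) (d : R) : Prop :=
  exists T : nat -> R,
    (forall M, is_sup (fun t => exists N, (M <= N)%nat /\ t = D N) (T M)) /\
    is_inf (fun t => exists M, t = T M) d.

(* d = d_W(x,y) = limsup_N sup_l (1/N) #{l <= n < l+N : x n <> y n}
   (indexed by N.+1 to avoid N = 0, which does not affect the limsup) *)
Definition weyl_dist (A : finType) (x y : nat -> A) (d : R) : Prop :=
  exists D : nat -> R,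
    (forall N, is_sup (fun t => exists l,
                 t = INR (mismatches x y l N.+1) / INR N.+1) (D N)) /\
    is_limsup D d.

Definition weyl_lt (A : finType) (x y : nat -> A) (eps : R) : Prop :=
  exists d, weyl_dist x y d /\ d < eps.

Definition weyl_rap (A : finType) (x : nat -> A) : Prop :=
  forall eps, 0 < eps ->
    exists (p : nat) (w : nat -> A), (0 < p)%nat /\ periodic_with w p /\ weyl_lt x w eps.

From Stdlib Require Import Reals Lra.
From mathcomp Require Import all_boot zify.

(* Column number 1 gives k >= 1 and a column j < Q := lambda^k on which theta^k
   is constant, equal to some letter b.  Since u = theta^k(u), the letter u n is
   F(u (n %/ Q), n %% Q) with F(a, r) the r-th letter of theta^k(a).  Hence if one
   of the K lowest base-Q digits of n equals j, then u n is determined by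
   n mod Q^K, so u agrees with the Q^K-periodic sequence n |-> u (n mod Q^K)
   outside the residues whose K lowest digits all avoid j.  These residues form a
   Q^K-periodic set of density ((Q-1)/Q)^K, so every window of length N contains
   at most (N %/ Q^K + 1) (Q-1)^K mismatches, and d_W is at most ((Q-1)/Q)^K,
   which tends to 0. *)

Set Implicit Arguments. Unset Strict Implicit. Unset Printing Implicit Defensive.

Section FixedPoint.
Local Open Scope nat_scope.
Variables (A : finType) (lambda : nat) (theta : A -> lambda.-tuple A) (a0 : A).

Lemma size_subst_word (w : seq A) : size (subst_word theta w) = lambda * size w.
Proof.
elim: w => [|a w IHw] /=; first by rewrite muln0.
by rewrite size_cat IHw size_tuple mulnS.
Qed.

Lemma size_subst_iter k a : size (subst_iter theta k a) = lambda ^ k.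
Proof.
elim: k => [|k IHk] //.
by rewrite /subst_iter iterS size_subst_word -/(subst_iter theta k a) IHk expnS.
Qed.

Lemma nth_subst_word (w : seq A) i r : r < lambda -> i < size w ->
  nth a0 (subst_word theta w) (lambda * i + r) = nth a0 (val (theta (nth a0 w i))) r.
Proof.
move=> lt_r; elim: w i => [|a w IHw] [|i] //= lt_i.
  by rewrite muln0 add0n nth_cat size_tuple lt_r.
rewrite nth_cat size_tuple mulnS -addnA ifF; last by rewrite ltnNge leq_addr.
by rewrite addKn IHw.
Qed.

Lemma fixed_point_iter (u : nat -> A) : is_fixed_point theta u ->
  forall k m r, r < lambda ^ k ->
  u (lambda ^ k * m + r) = nth a0 (subst_iter theta k (u m)) r.
Proof.
move=> fix_u; elim=> [|k IHk] m r lt_r.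
  by move: lt_r; rewrite expn0 ltnS leqn0 => /eqP ->; rewrite mul1n addn0.
have lambda_gt0 : 0 < lambda by case: lambda lt_r => //; rewrite exp0n.
have lt_q : r %/ lambda < lambda ^ k by rewrite ltn_divLR // -expnSr.
have -> : lambda ^ k.+1 * m + r = lambda * (lambda ^ k * m + r %/ lambda) + r %% lambda.
  by rewrite mulnDr mulnA -expnS -addnA (mulnC lambda) -divn_eq.
have := fix_u (lambda ^ k * m + r %/ lambda) (Ordinal (ltn_pmod r lambda_gt0)).
move=> /= ->; rewrite IHk // (tnth_nth a0).
by rewrite [in RHS](divn_eq r lambda) (mulnC _ lambda) nth_subst_word ?ltn_pmod ?size_subst_iter.
Qed.

Lemma constant_column_of_column_number_one : is_column_number theta a0 1 ->
  exists k j b, 0 < k /\ j < lambda ^ k /\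
    forall a, nth a0 (subst_iter theta k a) j = b.
Proof.
move=> [[k [j [k_gt0 [lt_j card1]]]] _].
have /cards1P [b col_b] : #|[set nth a0 (subst_iter theta k a) j | a : A]| == 1 by apply/eqP.
exists k, j, b; do 2!split => //; move=> a.
have : nth a0 (subst_iter theta k a) j \in [set nth a0 (subst_iter theta k a) j | a : A].
  exact: imset_f.
by rewrite col_b in_set1 => /eqP.
Qed.

End FixedPoint.

Section PeriodicCount.
Local Open Scope nat_scope.
Variables (f : pred nat) (P : nat).
Hypothesis P_gt0 : 0 < P.
Hypothesis f_periodic : forall n, f (n + P) = f n.

Lemma count_period_shift l : count f (iota l P) = count f (iota 0 P).
Proof.
elim: l => [|l IHl] //; rewrite -IHl.
case: P P_gt0 f_periodic => // P' _ fP.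
have -> : iota l.+1 P'.+1 = iota l.+1 P' ++ [:: l + P'.+1].
  by rewrite -[P'.+1]addn1 iotaD /= addn1 addSn addnS.
by rewrite count_cat /= fP addn0 addnC.
Qed.

Lemma count_periods l m : count f (iota l (P * m)) = m * count f (iota 0 P).
Proof.
elim: m l => [|m IHm] l; first by rewrite muln0.
by rewrite mulnS iotaD count_cat count_period_shift IHm mulSn.
Qed.

(* A window of length N is covered by N %/ P + 1 consecutive periods. *)
Lemma count_window_le l N : count f (iota l N) <= (N %/ P + 1) * count f (iota 0 P).
Proof.
rewrite -(count_periods l).
have cover : N <= P * (N %/ P + 1).
  by rewrite mulnDr muln1 {1}(divn_eq N P) mulnC leq_add2l ltnW // ltn_pmod.
by rewrite -(subnKC cover) iotaD count_cat leq_addr.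
Qed.

End PeriodicCount.

Section ConstantDigit.
Local Open Scope nat_scope.
Variables (A : finType) (u : nat -> A) (Q j : nat) (F : A -> nat -> A) (b : A).
Hypothesis lt_j : j < Q.
Hypothesis u_blocks : forall m r, r < Q -> u (Q * m + r) = F (u m) r.
Hypothesis F_const : forall a, F a j = b.

Let Q_gt0 : 0 < Q. Proof. exact: leq_ltn_trans lt_j. Qed.

Fixpoint avoids_digit (K n : nat) : bool :=
  if K is K'.+1 then (n %% Q != j) && avoids_digit K' (n %/ Q) else true.

Lemma u_last_digit n : u n = F (u (n %/ Q)) (n %% Q).
Proof. by rewrite -u_blocks ?ltn_pmod // mulnC -divn_eq. Qed.

(* If one of the K lowest digits of n is j, then u n depends only on n mod Q^K:
   the digit j forces the letter b, and the digits below it then determine u n. *)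
Lemma u_determined_by_low_digits K n n' :
  ~~ avoids_digit K n -> n %% Q ^ K = n' %% Q ^ K -> u n = u n'.
Proof.
elim: K n n' => [|K IHK] n n' //=; rewrite negb_and negbK => hit eq_mod.
have eq_last : n %% Q = n' %% Q.
  have dvd_Q : Q %| Q ^ K.+1 by rewrite expnS dvdn_mulr.
  by rewrite -(modn_dvdm n dvd_Q) eq_mod modn_dvdm.
case/orP: hit => [/eqP last_j | hit].
  by rewrite u_last_digit last_j F_const u_last_digit -eq_last last_j F_const.
rewrite u_last_digit (u_last_digit n') -eq_last (IHK (n %/ Q) (n' %/ Q)) //.
by rewrite !modn_divl -expnSr eq_mod.
Qed.

Lemma avoids_digit_mod K n : avoids_digit K (n %% Q ^ K) = avoids_digit K n.
Proof.
elim: K n => [|K IHK] n //=.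
by rewrite expnSr modn_dvdm ?dvdn_mull // -modn_divl IHK.
Qed.

Lemma avoids_digit_periodic K n : avoids_digit K (n + Q ^ K) = avoids_digit K n.
Proof. by rewrite -avoids_digit_mod modnDr avoids_digit_mod. Qed.

(* Among Q*M, ..., Q*M + Q - 1 the lowest digit runs through 0..Q-1 once. *)
Lemma count_avoids_block K M : count (avoids_digit K.+1) (iota (Q * M) Q) =
  (if avoids_digit K M then Q - 1 else 0).
Proof.
rewrite -[Q * M]addn0 iotaDl count_map.
rewrite (@eq_in_count _ _ (fun r => (r != j) && avoids_digit K M)); last first.
  move=> r; rewrite mem_iota add0n => lt_r /=.
  by rewrite mulnC modnMDl modn_small // divnMDl // divn_small // addn0.
case: (avoids_digit K M); last by elim: (iota 0 Q) => //= x s ->; rewrite andbF.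
have one_j : count (pred1 j) (iota 0 Q) = 1.
  by rewrite count_uniq_mem ?iota_uniq // mem_iota add0n lt_j.
have := count_predC (pred1 j) (iota 0 Q); rewrite size_iota one_j.
rewrite (@eq_count _ _ (predC (pred1 j))) => [|x /=]; [lia | by rewrite andbT].
Qed.

Lemma count_avoids_scale K M : count (avoids_digit K.+1) (iota 0 (Q * M)) =
  (Q - 1) * count (avoids_digit K) (iota 0 M).
Proof.
elim: M => [|M IHM]; first by rewrite muln0 /= muln0.
rewrite mulnS addnC iotaD count_cat IHM add0n -[M.+1]addn1 iotaD count_cat /=.
rewrite add0n addn0 count_avoids_block; case: (avoids_digit K M); lia.
Qed.

Lemma count_avoids_digit K : count (avoids_digit K) (iota 0 (Q ^ K)) = (Q - 1) ^ K.
Proof. by elim: K => [|K IHK] //; rewrite !expnS count_avoids_scale IHK. Qed.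

(* u and its Q^K-periodic truncation n |-> u (n mod Q^K) differ only at positions
   avoiding the digit j, so in any window of length N they differ at most
   (N %/ Q^K + 1) (Q-1)^K times. *)
Lemma mismatches_truncation_le K l N :
  mismatches u (fun n => u (n %% Q ^ K)) l N <= (N %/ Q ^ K + 1) * (Q - 1) ^ K.
Proof.
apply: (leq_trans (@sub_count _ _ (avoids_digit K) _ _)).
  move=> n /= neq; apply/negPn/negP => hit; move: neq.
  by rewrite (@u_determined_by_low_digits K n (n %% Q ^ K)) ?modn_mod ?eqxx.
rewrite -count_avoids_digit; apply: count_window_le; first by rewrite expn_gt0 Q_gt0.
exact: avoids_digit_periodic.
Qed.

End ConstantDigit.

Section WeylEstimates.
Local Open Scope R_scope.
Variables (A : finType) (x y : nat -> A).

Lemma mismatch_ratio_bounds l N :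
  0 <= INR (mismatches x y l N.+1) / INR N.+1 <= 1.
Proof.
have N_pos : 0 < INR N.+1 by apply: lt_0_INR; apply/ltP.
have : INR (mismatches x y l N.+1) <= INR N.+1.
  by apply: le_INR; apply/leP; rewrite /mismatches -{2}(size_iota l N.+1) count_size.
split; first by apply: Rle_mult_inv_pos => //; apply: pos_INR.
apply: (Rmult_le_reg_r (INR N.+1)) => //; rewrite /Rdiv Rmult_assoc Rinv_l; lra.
Qed.

Lemma lub_of (E : R -> Prop) (ub t : R) :
  (forall s, E s -> s <= ub) -> E t -> {m | is_lub E m}.
Proof. by move=> E_ub Et; apply: completeness; [exists ub | exists t]. Qed.

(* If the windowed mismatch frequencies are eventually at most g, then
   d_W(x, y) exists and is at most g: every sup and the limsup are taken
   over sets of reals in [0, 1]. *)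
Lemma weyl_dist_le_of_eventual_bound (g : R) (M : nat) :
  (forall l N, (M <= N)%nat -> INR (mismatches x y l N.+1) / INR N.+1 <= g) ->
  exists d, weyl_dist x y d /\ d <= g.
Proof.
move=> ratio_le_g.
pose E N t := exists l, t = INR (mismatches x y l N.+1) / INR N.+1.
have D_spec N : {m | is_lub (E N) m}.
  by apply: (@lub_of _ 1 _ _ (ex_intro _ 0%nat erefl)) => t [l ->];
    case: (mismatch_ratio_bounds l N).
pose D N := sval (D_spec N).
have D_bounds N : 0 <= D N <= 1.
  have [D_ub D_least] := svalP (D_spec N); split.
    exact: Rle_trans (proj1 (mismatch_ratio_bounds 0 N)) (D_ub _ (ex_intro _ 0%nat erefl)).
  by apply: D_least => t [l ->]; case: (mismatch_ratio_bounds l N).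
(* T M': sup of the tail (D N)_{N >= M'}; d_W is the inf of T, i.e. -(sup of -T). *)
pose G M' t := exists N, (M' <= N)%nat /\ t = D N.
have T_spec M' : {m | is_lub (G M') m}.
  by apply: (@lub_of _ 1 (D M')) => [t [N [_ ->]]|]; [case: (D_bounds N) | exists M'].
pose T M' := sval (T_spec M').
have T_ge0 M' : 0 <= T M'.
  apply: Rle_trans (proj1 (D_bounds M')) _.
  by apply: (proj1 (svalP (T_spec M'))); exists M'.
pose H t := exists M', - t = T M'.
have [m m_lub] : {m | is_lub H m}.
  apply: (@lub_of _ 0 (- T 0%nat)) => [t [M' hM]|]; last by exists 0%nat; rewrite Ropp_involutive.
  by have := T_ge0 M'; lra.
exists (- m); split.
  exists D; split; first by move=> N; exact: svalP (D_spec N).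
  by exists T; split; [move=> M'; exact: svalP (T_spec M') | rewrite /is_inf Ropp_involutive].
have TM_le_g : T M <= g.
  apply: (proj2 (svalP (T_spec M))) => t [N [le_MN ->]].
  by apply: (proj2 (svalP (D_spec N))) => t' [l ->]; exact: ratio_le_g.
have : - T M <= m by apply: (proj1 m_lub); exists M; rewrite Ropp_involutive.
lra.
Qed.

End WeylEstimates.

Local Open Scope R_scope.

Lemma INR_expn a K : INR (a ^ K)%N = INR a ^ K.
Proof. by elim: K => [|K IHK] //=; rewrite expnS mult_INR IHK. Qed.

Lemma window_ratio_le mm n P C : (0 < n)%N -> (0 < P)%N ->
  (mm <= (n %/ P + 1) * C)%N -> INR mm / INR n <= INR C / INR P + INR C / INR n.
Proof.
move=> n_gt0 P_gt0 mm_le.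
have n_pos : 0 < INR n by apply: lt_0_INR; apply/ltP.
have P_pos : 0 < INR P by apply: lt_0_INR; apply/ltP.
have quot_le : INR (n %/ P) * INR P <= INR n.
  by rewrite -mult_INR; apply: le_INR; apply/leP; exact: leq_divM.
have mm_le' : INR mm <= (INR (n %/ P) + 1) * INR C.
  by rewrite -[1]/(INR 1) -plus_INR -mult_INR; apply: le_INR; apply/leP.
have C_ge0 : 0 <= INR C by apply: pos_INR.
have quot_ge0 : 0 <= INR (n %/ P) by apply: pos_INR.
have gap_ge0 : 0 <= (INR C * INR n + INR C * INR P - INR mm * INR P) / (INR n * INR P).
  by apply: Rle_mult_inv_pos; nra.
have -> : INR C / INR P + INR C / INR n =
  INR mm / INR n + (INR C * INR n + INR C * INR P - INR mm * INR P) / (INR n * INR P).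
  by field; lra.
lra.
Qed.

(* Density criterion: if in every window of length N there are at most
   (N %/ P + 1) C mismatches and the density C/P is below eps, then
   d_W(x, y) < eps (the error term C/N vanishes as N grows). *)
Lemma weyl_lt_of_window_bound (A : finType) (x y : nat -> A) (P C : nat) (eps : R) :
  (0 < P)%N -> (forall l N, (mismatches x y l N <= (N %/ P + 1) * C)%N) ->
  INR C / INR P < eps -> weyl_lt x y eps.
Proof.
move=> P_gt0 window_le density_lt.
have C_ge0 : 0 <= INR C by apply: pos_INR.
have P_pos : 0 < INR P by apply: lt_0_INR; apply/ltP.
set gap := (eps - INR C / INR P) / (INR C + 1).
have gap_pos : 0 < gap by apply: Rdiv_lt_0_compat; lra.
have gap_mul : gap * (INR C + 1) = eps - INR C / INR P by rewrite /gap; field; lra.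
have [N0 [N0_inv_lt N0_gt0]] := archimed_cor1 _ gap_pos.
have N0_pos : 0 < INR N0 by apply: lt_0_INR.
have error_lt : INR C / INR N0 < eps - INR C / INR P.
  have : INR C / INR N0 <= INR C * gap by apply: Rmult_le_compat_l => //; lra.
  nra.
have ratio_le l N : (N0 <= N)%N ->
    INR (mismatches x y l N.+1) / INR N.+1 <= INR C / INR P + INR C / INR N0.
  move=> le_N0; apply: Rle_trans (window_ratio_le (ltn0Sn N) P_gt0 (window_le l N.+1)) _.
  apply: Rplus_le_compat_l; apply: Rmult_le_compat_l => //.
  by apply: Rinv_le_contravar => //; apply: le_INR; apply/leP; exact: leqW.
have [d [dist_d d_le]] := weyl_dist_le_of_eventual_bound ratio_le.
exists d; split => //; lra.
Qed.

Lemma avoiding_density_small (Q : nat) (eps : R) : (0 < Q)%N -> 0 < eps ->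
  exists K, (1 <= K)%N /\ INR ((Q - 1) ^ K) / INR (Q ^ K) < eps.
Proof.
move=> Q_gt0 eps_pos.
have Q_pos : 0 < INR Q by apply: lt_0_INR; apply/ltP.
have ratio_lt1 : Rabs (INR (Q - 1) / INR Q) < 1.
  have Q_ge1 : 1 <= INR Q by rewrite -[1]/(INR 1); apply: le_INR; apply/leP.
  rewrite minus_INR; last by apply/leP.
  change (INR 1) with 1.
  rewrite Rabs_right; last by apply: Rle_ge; apply: Rle_mult_inv_pos => //; lra.
  by apply: (Rmult_lt_reg_r (INR Q)) => //; rewrite /Rdiv Rmult_assoc Rinv_l; lra.
have [K0 small] := pow_lt_1_zero _ ratio_lt1 eps eps_pos.
exists K0.+1; split => //.
rewrite !INR_expn /Rdiv -pow_inv -Rpow_mult_distr.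
exact: Rle_lt_trans (Rle_abs _) (small K0.+1 (le_S _ _ (le_n K0))).
Qed.

Lemma truncations_weyl_approximate (A : finType) (u : nat -> A) (Q j : nat)
    (F : A -> nat -> A) (b : A) :
  (j < Q)%N -> (forall m r, (r < Q)%N -> u (Q * m + r)%N = F (u m) r) ->
  (forall a, F a j = b) ->
  forall eps, 0 < eps ->
  exists K, (1 <= K)%N /\ weyl_lt u (fun n => u (n %% Q ^ K)%N) eps.
Proof.
move=> lt_j u_blocks F_const eps eps_pos.
have Q_gt0 : (0 < Q)%N by exact: leq_ltn_trans lt_j.
have [K [K_ge1 density_lt]] := avoiding_density_small Q_gt0 eps_pos.
exists K; split => //.
apply: (weyl_lt_of_window_bound _ _ density_lt); first by rewrite expn_gt0 Q_gt0.
exact: mismatches_truncation_le lt_j u_blocks F_const K.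
Qed.

Theorem mainTheorem8 (A : finType) (lambda : nat) (theta : A -> lambda.-tuple A)
  (a0 : A) (u : nat -> A) :
  (2 <= lambda)%nat ->
  primitive_subst theta ->
  nth a0 (val (theta a0)) 0 = a0 ->
  injective theta ->
  subshift_infinite theta ->
  is_column_number theta a0 1 ->
  u 0%nat = a0 ->
  is_fixed_point theta u ->
  weyl_rap u /\
  (forall eps : R, (0 < eps)%R ->
     exists (k : nat) (w : nat -> A),
       (1 <= k)%nat /\ periodic_with w (lambda ^ k) /\ weyl_lt u w eps).
Proof.
move=> lambda_ge2 _ _ _ _ column1 _ fix_u.
have [k [j [b [k_gt0 [lt_j col_const]]]]] := constant_column_of_column_number_one column1.
have approx := @truncations_weyl_approximate A u _ j
  (fun a r => nth a0 (subst_iter theta k a) r) b lt_j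
  (fixed_point_iter a0 fix_u (k := k)) col_const.
have periodic_approx eps : 0 < eps -> exists k' (w : nat -> A),
    (1 <= k')%N /\ periodic_with w (lambda ^ k') /\ weyl_lt u w eps.
  move=> eps_pos; have [K [K_ge1 close]] := approx eps eps_pos.
  exists (k * K)%N, (fun n => u (n %% (lambda ^ k) ^ K)%N).
  split; first by rewrite muln_gt0 k_gt0.
  by split => // n; rewrite /= expnM modnDr.
split => // eps eps_pos.
have [k' [w [k'_ge1 [w_per close]]]] := periodic_approx eps eps_pos.
exists (lambda ^ k')%N, w; split => //.
by rewrite expn_gt0 (leq_trans _ lambda_ge2).
Qed.
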